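(* Let $V$ be a real Hilbert space, $\mathcal D$ a dictionary, $V_n\subset V$ a subspace of dimension $n$ with orthonormal basis $\Phi=(\phi_1,\dots,\phi_n)$, and $\kappa\in(0,1)$. Let $(W_m)_{m\ge0}$ be generated by the collective OMP algorithm with parameter $\kappa$. Then for every $\Psi=(\psi_1,\dots,\psi_n)\in V^n$, $$r_m\le4\frac{\|\Psi\|_{\ell^1(\mathcal D)}^2}{\kappa^2}(m+1)^{-1}+\|\Phi-\Psi\|^2\qquad\text{for all }m\ge1,$$ where $\|\Phi-\Psi\|^2=\sum_{i=1}^n\|\phi_i-\psi_i\|^2$.
   Context: A dictionary is a set $\mathcal D\subset V$ of elements with $\|\omega\|=1$ for all $\omega\in\mathcal D$ whose finite linear combinations are dense in $V$. Collective OMP: $W_0=\{0\}$; for $k\ge1$, choose $\omega_k\in\mathcal D$ with $$\sum_{i=1}^n|\langle\phi_i-P_{W_{k-1}}\phi_i,\omega_k\rangle|^2\ge\kappa^2\sup_{\omega\in\mathcal D}\sum_{i=1}^n|\langle\phi_i-P_{W_{k-1}}\phi_i,\omega\rangle|^2,$$ and set $W_k=\operatorname{span}\{\omega_1,\dots,\omega_k\}$ ($P_X$ is the orthogonal projection onto $X$). The residual is $r_m=\sum_{i=1}^n\|\phi_i-P_{W_m}\phi_i\|^2$. For $\Psi\in V^n$, $\|\Psi\|_{\ell^1(\mathcal D)}=\inf\{\sum_{\omega\in\mathcal D}\|c_\omega\|_2:\psi_i=\sum_{\omega\in\mathcal D}c_{\omega,i}\,\omega,\ i=1,\dots,n\}$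 with $c_\omega\in\mathbb R^n$ (countably many nonzero; infimum of the empty set is $+\infty$). *)

From HB Require Import structures.
From mathcomp Require Import all_boot all_order all_algebra.
From mathcomp Require Import all_classical all_reals all_analysis.
Set Implicit Arguments. Unset Strict Implicit. Unset Printing Implicit Defensive.
Import Order.TTheory GRing.Theory Num.Theory.
Import numFieldNormedType.Exports.
Local Open Scope classical_set_scope.
Local Open Scope ring_scope.

Section Defs.
Variables (R : realType) (V : completeNormedModType R).

(* [inner] is an inner product on V inducing the norm of V; together with
   completeness of V this makes V a real Hilbert space. *)
Definition is_inner_product (inner : V -> V -> R) : Prop :=
  [/\ (forall a x y z, inner (a *: x + y) z = a * inner x z + inner y z),
      (forall x y, inner x y = inner y x) &
      (forall x, inner x x = `|x| ^+ 2)].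

Definition span_set (D : set V) : set V :=
  [set x | exists (k : nat) (w : 'I_k -> V) (a : 'I_k -> R),
     (forall j, D (w j)) /\ x = \sum_(j < k) a j *: w j].

Definition is_dictionary (D : set V) : Prop :=
  (forall w, D w -> `|w| = 1) /\ closure (span_set D) = setT.

Definition Wspan (omega : nat -> V) (m : nat) : set V :=
  [set x | exists a : 'I_m -> R, x = \sum_(j < m) a j *: omega j.+1].

(* orthogonal projection onto W (well defined when W is a finite-dimensional
   subspace: the unique p in W with x - p orthogonal to W) *)
Definition proj (inner : V -> V -> R) (W : set V) (x : V) : V :=
  xget 0 [set p | W p /\ forall w, W w -> inner (x - p) w = 0].

Definition is_orthonormal (inner : V -> V -> R) n (phi : 'I_n -> V) : Prop :=
  forall i j, inner (phi i) (phi j) = (i == j)%:R.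

Definition collective_omp (inner : V -> V -> R) (D : set V) n
    (phi : 'I_n -> V) (kappa : R) (omega : nat -> V) : Prop :=
  forall k : nat,
    D (omega k.+1) /\
    \sum_(i < n) (inner (phi i - proj inner (Wspan omega k) (phi i))
                        (omega k.+1)) ^+ 2
    >= kappa ^+ 2 *
       sup [set \sum_(i < n) (inner (phi i - proj inner (Wspan omega k) (phi i))
                                    w) ^+ 2 | w in D].

Definition residual (inner : V -> V -> R) n (phi : 'I_n -> V)
    (omega : nat -> V) (m : nat) : R :=
  \sum_(i < n) `|phi i - proj inner (Wspan omega m) (phi i)| ^+ 2.

Definition l1_representation (D : set V) n (psi : 'I_n -> V)
    (w : nat -> V) (c : nat -> 'I_n -> R) : Prop :=
  (forall k, D (w k)) /\
  (forall i, series (fun k => c k i *: w k) @ \oo --> psi i).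

Definition l1_cost n (c : nat -> 'I_n -> R) : \bar R :=
  (\sum_(0 <= k <oo) (Num.sqrt (\sum_(i < n) (c k i) ^+ 2))%:E)%E.

Definition l1_norm (D : set V) n (psi : 'I_n -> V) : \bar R :=
  ereal_inf [set l1_cost c | c in
    [set c | exists w, l1_representation D psi w c]].

End Defs.

(* Let [rho k] be the residual after [k] steps and [S k] the largest gain
   [sum_i <phi_i - P_k phi_i, w>^2] over atoms [w].  Adding to each projection
   its component along the selected atom shows [rho k.+1 <= rho k - kappa^2 S k].
   On the other hand [rho k = sum_i <r_i, psi_i> + sum_i <r_i, phi_i - psi_i>]
   with [r_i = phi_i - P_k phi_i]: expanding [psi] over the dictionary bounds the
   first sum by [|Psi|_l1 sqrt (S k)], Cauchy-Schwarz bounds the second by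
   [sqrt (rho k) |Phi - Psi|].  Hence [a k := rho k - |Phi - Psi|^2] satisfies
   [a k.+1 <= a k - a k^2 / B] whenever [a k >= 0], with
   [B = 4 |Psi|_l1^2 / kappa^2], and such a sequence stays below [B / (k + 1)]. *)

From HB Require Import structures.
From mathcomp Require Import all_boot all_order all_algebra.
From mathcomp Require Import all_classical all_reals all_analysis.
From mathcomp Require Import ring lra.
(* Imported last so that [Defs.proj] shadows the [proj] of the analysis library. *)
From Pilot Require Import Defs.
Import Order.TTheory GRing.Theory Num.Theory.
Import numFieldNormedType.Exports.
Local Open Scope classical_set_scope.
Local Open Scope ring_scope.
Set Implicit Arguments. Unset Strict Implicit. Unset Printing Implicit Defensive.

Section InnerProduct.
Variables (R : realType) (V : completeNormedModType R) (inner : V -> V -> R).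
Hypothesis ip : is_inner_product inner.

Lemma innerDZl a x y z : inner (a *: x + y) z = a * inner x z + inner y z.
Proof. by case: ip. Qed.

Lemma innerC x y : inner x y = inner y x.
Proof. by case: ip. Qed.

Lemma inner_self x : inner x x = `|x| ^+ 2.
Proof. by case: ip. Qed.

Lemma innerDl x y z : inner (x + y) z = inner x z + inner y z.
Proof. by rewrite -{1}[x]scale1r innerDZl mul1r. Qed.

Lemma inner0l z : inner 0 z = 0.
Proof. by apply: (addIr (inner 0 z)); rewrite add0r -innerDl addr0. Qed.

Lemma innerZl a x z : inner (a *: x) z = a * inner x z.
Proof. by rewrite -[a *: x]addr0 innerDZl inner0l addr0. Qed.

Lemma innerBl x y z : inner (x - y) z = inner x z - inner y z.
Proof. by rewrite innerDl -scaleN1r innerZl mulN1r. Qed.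

Lemma inner0r z : inner z 0 = 0.
Proof. by rewrite innerC inner0l. Qed.

Lemma innerDr x y z : inner z (x + y) = inner z x + inner z y.
Proof. by rewrite innerC innerDl !(innerC z). Qed.

Lemma innerZr a x z : inner z (a *: x) = a * inner z x.
Proof. by rewrite innerC innerZl innerC. Qed.

Lemma innerBr x y z : inner z (x - y) = inner z x - inner z y.
Proof. by rewrite innerC innerBl !(innerC z). Qed.

Lemma inner_sumr I (r : seq I) (P : pred I) (F : I -> V) z :
  inner z (\sum_(i <- r | P i) F i) = \sum_(i <- r | P i) inner z (F i).
Proof.
by elim/big_rec2: _ => [|i y1 y2 _ <-]; rewrite ?inner0r ?innerDr.
Qed.

Lemma sqr_normD x y : `|x + y| ^+ 2 = `|x| ^+ 2 + 2 * inner x y + `|y| ^+ 2.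
Proof. by rewrite -!inner_self innerDl !innerDr (innerC y x); ring. Qed.

Lemma sqr_normB x y : `|x - y| ^+ 2 = `|x| ^+ 2 - 2 * inner x y + `|y| ^+ 2.
Proof. by rewrite sqr_normD -scaleN1r innerZr normrZ normrN1 mul1r; ring. Qed.

Lemma sqr_inner_le x y : inner x y ^+ 2 <= `|x| ^+ 2 * `|y| ^+ 2.
Proof.
have [->|y0] := eqVneq y 0; first by rewrite inner0r normr0 expr0n /= !mulr0.
have s0 : 0 < `|y| ^+ 2 by rewrite exprn_gt0 ?normr_gt0.
set s := `|y| ^+ 2; set c := inner x y.
have := sqr_ge0 `|x - (c / s) *: y|.
rewrite sqr_normB innerZr normrZ exprMn real_normK ?num_real // -/s -/c.
have -> : `|x| ^+ 2 - 2 * (c / s * c) + (c / s) ^+ 2 * s =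
          (`|x| ^+ 2 * s - c ^+ 2) / s by field; rewrite gt_eqF.
by rewrite ler_pdivlMr // mul0r subr_ge0.
Qed.

Lemma normr_inner_le x y : `|inner x y| <= `|x| * `|y|.
Proof.
rewrite -(@ler_pXn2r _ 2) ?nnegrE ?mulr_ge0 //.
by rewrite real_normK ?num_real // exprMn sqr_inner_le.
Qed.

Lemma inner_le x y : inner x y <= `|x| * `|y|.
Proof. exact: le_trans (ler_norm _) (normr_inner_le x y). Qed.

Lemma cvg_innerr (u : nat -> V) y z : u @ \oo --> y ->
  (fun N => inner z (u N)) @ \oo --> inner z y.
Proof.
move=> /cvgrPdist_le uy; apply/cvgrPdist_le => e e0.
have e1 : 0 < e / (`|z| + 1) by rewrite divr_gt0 // ltr_wpDl.
apply: filterS (uy _ e1) => N HN.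
rewrite -innerBr; apply: le_trans (normr_inner_le _ _) _.
apply: le_trans (ler_wpM2l (normr_ge0 _) HN) _.
by rewrite mulrA ler_pdivrMr ?ltr_wpDl // mulrC ler_pM2l // lerDl.
Qed.

End InnerProduct.

Section Span.
Variables (R : realType) (V : completeNormedModType R) (omega : nat -> V).
Local Notation W := (Wspan omega).

Lemma Wspan0 m : W m 0.
Proof. by exists (fun => 0); rewrite big1 // => j _; rewrite scale0r. Qed.

Lemma WspanD m x y : W m x -> W m y -> W m (x + y).
Proof.
move=> [a ->] [b ->]; exists (fun j => a j + b j).
by rewrite -big_split; apply: eq_bigr => j _; rewrite scalerDl.
Qed.

Lemma WspanZ m c x : W m x -> W m (c *: x).
Proof.
move=> [a ->]; exists (fun j => c * a j).
by rewrite scaler_sumr; apply: eq_bigr => j _; rewrite scalerA.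
Qed.

Lemma WspanB m x y : W m x -> W m y -> W m (x - y).
Proof. by move=> Wx Wy; rewrite -scaleN1r; apply/WspanD/WspanZ. Qed.

Lemma WspanS m x : W m x -> W m.+1 x.
Proof.
move=> [a ->]; exists (fun j : 'I_m.+1 => oapp a 0 (insub (val j))).
rewrite big_ord_recr /= insubF ?ltnn //= scale0r addr0.
apply: eq_bigr => j _ /=; case: insubP => [k _ /val_inj -> //|].
by rewrite ltn_ord.
Qed.

Lemma Wspan_last m : W m.+1 (omega m.+1).
Proof.
exists (fun j : 'I_m.+1 => (val j == m)%:R).
rewrite big_ord_recr /= eqxx scale1r big1 ?add0r // => j _.
by rewrite ltn_eqF ?ltn_ord // scale0r.
Qed.

Lemma WspanSP m x : W m.+1 x -> exists w t, W m w /\ x = w + t *: omega m.+1.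
Proof.
by move=> [a ->]; rewrite big_ord_recr /=; do 2!eexists; split; first eexists.
Qed.

End Span.

Section Projection.
Variables (R : realType) (V : completeNormedModType R) (inner : V -> V -> R).
Hypothesis ip : is_inner_product inner.
Variable omega : nat -> V.
Local Notation W := (Wspan omega).

(* Gram-Schmidt: correct the projection onto [W m] along the component of
   [omega m.+1] orthogonal to [W m]. *)
Lemma proj_exists m x :
  exists p, W m p /\ forall w, W m w -> inner (x - p) w = 0.
Proof.
elim: m x => [|m IH] x.
  exists 0; split=> [|w [a ->]]; first exact: Wspan0.
  by rewrite big_ord0 (inner0r ip).
have [p [Wp op]] := IH x; have [q [Wq oq]] := IH (omega m.+1).
set u := omega m.+1 - q.
have omega_uq : omega m.+1 = u + q by rewrite subrK.
have [u0|u0] := eqVneq u 0.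
  exists p; split=> [|w /WspanSP [w' [t [Ww' ->]]]]; first exact: WspanS.
  by rewrite (innerDr ip) (innerZr ip) omega_uq u0 add0r !op ?mulr0 ?addr0.
set c := inner (x - p) u / inner u u.
have uu0 : inner u u != 0 by rewrite (inner_self ip) sqrf_eq0 normr_eq0.
have ortho w : W m w -> inner (x - (p + c *: u)) w = 0.
  by move=> Ww; rewrite opprD addrA (innerBl ip) (innerZl ip) op // oq // mulr0 subr0.
exists (p + c *: u); split=> [|w /WspanSP [w' [t [Ww' ->]]]].
  by apply/WspanD/WspanZ/WspanB; [apply: WspanS|apply: Wspan_last|apply: WspanS].
rewrite (innerDr ip) ortho // add0r (innerZr ip) omega_uq (innerDr ip) (ortho q Wq) addr0.
by rewrite opprD addrA (innerBl ip) (innerZl ip) /c divfK // subrr mulr0.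
Qed.

Lemma projP m x : W m (proj inner (W m) x) /\
  forall w, W m w -> inner (x - proj inner (W m) x) w = 0.
Proof. exact: (xgetPex 0 (proj_exists m x)). Qed.

Lemma proj_min m x w : W m w -> `|x - proj inner (W m) x| ^+ 2 <= `|x - w| ^+ 2.
Proof.
move=> Ww; have [WP oP] := projP m x.
have -> : x - w = (x - proj inner (W m) x) + (proj inner (W m) x - w).
  by rewrite addrA subrK.
rewrite [leRHS](sqr_normD ip) oP ?mulr0 ?addr0; first by rewrite lerDl sqr_ge0.
exact: WspanB.
Qed.

Lemma inner_proj_self m x :
  inner (x - proj inner (W m) x) x = `|x - proj inner (W m) x| ^+ 2.
Proof.
have [WP oP] := projP m x.
by rewrite -(inner_self ip) [in RHS](innerBr ip) (oP _ WP) subr0.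
Qed.

End Projection.

Lemma sum_mul_sqr_le (R : realFieldType) n (a b : 'I_n -> R) :
  (\sum_i a i * b i) ^+ 2 <= (\sum_i a i ^+ 2) * (\sum_i b i ^+ 2).
Proof.
set A := \sum_i a i ^+ 2; set B := \sum_i b i ^+ 2; set P := \sum_i a i * b i.
have A0 : 0 <= A by apply: sumr_ge0 => i _; apply: sqr_ge0.
have [A_eq0|A_neq0] := eqVneq A 0.
  have a0 i : a i = 0.
    apply/eqP; rewrite -sqrf_eq0; apply/eqP.
    exact: (psumr_eq0P (fun j _ => sqr_ge0 (a j)) A_eq0).
  by rewrite /P big1 ?expr0n ?mulr_ge0 ?sumr_ge0 // => i _; rewrite ?a0 ?mul0r ?sqr_ge0.
have A_gt0 : 0 < A by rewrite lt_def A_neq0.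
set t := P / A.
have : 0 <= \sum_i (a i * t - b i) ^+ 2 by apply: sumr_ge0 => i _; apply: sqr_ge0.
have -> : \sum_i (a i * t - b i) ^+ 2 = (A * B - P ^+ 2) / A.
  transitivity (A * t ^+ 2 - 2 * t * P + B); last by rewrite /t; field; rewrite A_neq0.
  rewrite /A /B /P mulr_suml mulr_sumr -sumrN -!big_split /=.
  by apply: eq_bigr => i _; ring.
by rewrite ler_pdivlMr // mul0r subr_ge0 mulrC.
Qed.

Lemma sum_mul_le (R : rcfType) n (a b : 'I_n -> R) :
  \sum_i a i * b i <= Num.sqrt (\sum_i a i ^+ 2) * Num.sqrt (\sum_i b i ^+ 2).
Proof.
rewrite -sqrtrM ?sumr_ge0 // => [|i _]; last exact: sqr_ge0.
apply: le_trans (ler_norm _) _; rewrite -sqrtr_sqr.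
exact/ler_wsqrtr/sum_mul_sqr_le.
Qed.

Lemma l1_cost_ge0 (R : realType) n (c : nat -> 'I_n -> R) : (0 <= l1_cost c)%E.
Proof. by apply: nneseries_ge0 => k _ _; rewrite lee_fin sqrtr_ge0. Qed.

Lemma l1_norm_ge0 (R : realType) (V : completeNormedModType R) (D : set V) n
    (psi : 'I_n -> V) :
  (0 <= l1_norm D psi)%E.
Proof. by apply: le_ereal_inf_tmp => _ [c _ <-]; apply: l1_cost_ge0. Qed.

Section L1Bound.
Variables (R : realType) (V : completeNormedModType R) (inner : V -> V -> R).
Hypothesis ip : is_inner_product inner.

(* Each atom [w k] of the representation of [psi] contributes at most
   [|c k| * sqrt S] by Cauchy-Schwarz in [R^n]. *)
Lemma sum_inner_le_l1_cost (D : set V) n (r psi : 'I_n -> V) (S : R) w c C :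
  (forall g, D g -> \sum_i inner (r i) g ^+ 2 <= S) -> 0 <= S ->
  l1_representation D psi w c -> l1_cost c = C%:E ->
  \sum_i inner (r i) (psi i) <= C * Num.sqrt S.
Proof.
move=> rS S0 [Dw cv] cost_c.
have lim_sum : (fun N => \sum_i inner (r i) (series (fun k => c k i *: w k) N))
    @ \oo --> \sum_i inner (r i) (psi i).
  by apply: (cvg_big add_continuous) => i _; exact: (cvg_innerr ip (z := r i) (cv i)).
apply: (cvgr_to_le lim_sum); apply: nearW => N.
have -> : \sum_i inner (r i) (series (fun k => c k i *: w k) N) =
          \sum_(0 <= k < N) \sum_i c k i * inner (r i) (w k).
  rewrite exchange_big /=; apply: eq_bigr => i _.
  by rewrite (inner_sumr ip); apply: eq_bigr => k _; rewrite (innerZr ip).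
have atom_le k : \sum_i c k i * inner (r i) (w k) <=
                 Num.sqrt (\sum_i c k i ^+ 2) * Num.sqrt S.
  by apply: le_trans (sum_mul_le _ _) _; rewrite ler_wpM2l ?sqrtr_ge0 ?ler_wsqrtr ?rS.
apply: le_trans (ler_sum _ (fun k _ => atom_le k)) _.
rewrite -mulr_suml ler_wpM2r ?sqrtr_ge0 // -lee_fin -cost_c -sumEFin.
by apply: nneseries_lim_ge => k _ _; rewrite lee_fin sqrtr_ge0.
Qed.

Lemma sum_inner_le_l1_norm (D : set V) n (r psi : 'I_n -> V) (S l : R) :
  (forall g, D g -> \sum_i inner (r i) g ^+ 2 <= S) -> 0 <= S ->
  l1_norm D psi = l%:E -> \sum_i inner (r i) (psi i) <= l * Num.sqrt S.
Proof.
move=> rS S0 psi_l; set s := Num.sqrt S; have s0 : 0 <= s by apply: sqrtr_ge0.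
have approx e : 0 < e -> \sum_i inner (r i) (psi i) <= (l + e) * s.
  move=> e0; have /(lb_ereal_inf_adherent e0) : l1_norm D psi \is a fin_num.
    by rewrite psi_l.
  case=> _ [c [w rep] <-]; rewrite -/(l1_norm D psi) psi_l => cost_lt.
  have cost_fin : l1_cost c \is a fin_num.
    by rewrite ge0_fin_numE ?l1_cost_ge0 // (lt_trans cost_lt) ?ltry.
  apply: le_trans (sum_inner_le_l1_cost rS S0 rep (esym (fineK cost_fin))) _.
  by rewrite ler_wpM2r // -lee_fin fineK // ltW.
apply/ler_addgt0Pr => e e0.
have e1 : 0 < e / (s + 1) by rewrite divr_gt0 // ltr_wpDl.
apply: le_trans (approx _ e1) _.
by rewrite mulrDl lerD2l mulrAC ler_pdivrMr ?ltr_wpDl // ler_pM2l // lerDl.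
Qed.

Lemma sum_inner_le n (r d : 'I_n -> V) :
  \sum_i inner (r i) (d i) <=
  Num.sqrt (\sum_i `|r i| ^+ 2) * Num.sqrt (\sum_i `|d i| ^+ 2).
Proof.
apply: le_trans (sum_mul_le (fun i => `|r i|) (fun i => `|d i|)).
by apply: ler_sum => i _; apply: inner_le.
Qed.

End L1Bound.

Section QuadraticRecursion.
Variable R : realFieldType.

Lemma quadratic_map_le_half (B x : R) : 0 < B -> x - x ^+ 2 / B <= B / 2.
Proof.
move=> B0; have := divr_ge0 (sqr_ge0 (x - B / 2)) (ltW B0).
have -> : x - x ^+ 2 / B = B / 4 - (x - B / 2) ^+ 2 / B by field; rewrite gt_eqF.
lra.
Qed.

Lemma quadratic_map_le_succ (B x : R) k : 0 < B -> 0 <= x -> x <= B / k.+2%:R ->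
  x - x ^+ 2 / B <= B / k.+3%:R.
Proof.
move=> B0 x0; set z : R := k.+2%:R; have z_gt1 : 1 < z by rewrite ltr1n.
have -> : k.+3%:R = z + 1 :> R by rewrite -addn1 natrD.
set y := B / z => xy.
(* [x |-> x - x^2/B] increases on [[0, B/2]], which contains [y] *)
have mono : x - x ^+ 2 / B <= y - y ^+ 2 / B.
  rewrite -subr_ge0.
  have -> : y - y ^+ 2 / B - (x - x ^+ 2 / B) = (y - x) * (B - x - y) / B.
    by field; rewrite gt_eqF.
  have yB : y <= B / 2 by rewrite ler_pM2l // lef_pV2 ?posrE ?ltr0n // ler_nat.
  by apply: divr_ge0; [apply: mulr_ge0; lra | exact: ltW].
apply: le_trans mono _; rewrite -subr_ge0.
have -> : B / (z + 1) - (y - y ^+ 2 / B) = B / (z ^+ 2 * (z + 1)).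
  by rewrite /y; field; rewrite !gt_eqF //; lra.
by apply: divr_ge0; [exact: ltW | apply: mulr_ge0; [exact: sqr_ge0 | lra]].
Qed.

Lemma quadratic_recursion_le (a : nat -> R) (B : R) : 0 < B ->
  (forall k, a k.+1 <= a k) ->
  (forall k, 0 <= a k -> a k.+1 <= a k - a k ^+ 2 / B) ->
  forall m, a m.+1 <= B / m.+2%:R.
Proof.
move=> B0 a_dec a_step.
have neg_case k j : a k < 0 -> a k.+1 <= B / j.+1%:R.
  by move=> ak; rewrite (le_trans (a_dec k)) // (le_trans (ltW ak)) // divr_ge0 ?ltW.
elim=> [|m IH].
  have [/neg_case //|a0] := ltP (a 0%N) 0.
  exact: le_trans (a_step _ a0) (quadratic_map_le_half _ B0).
have [/neg_case //|am] := ltP (a m.+1) 0.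
exact: le_trans (a_step _ am) (quadratic_map_le_succ B0 am IH).
Qed.

End QuadraticRecursion.

Section GreedyRate.
Variable R : rcfType.

Lemma sqr_gap_le (x y t : R) : 0 <= x -> 0 <= y -> y <= x ->
  x - Num.sqrt x * Num.sqrt y <= t -> (x - y) ^+ 2 <= 4 * t ^+ 2.
Proof.
move=> x0 y0 yx; move: (sqr_sqrtr x0) (sqr_sqrtr y0) (sqrtr_ge0 x) (sqrtr_ge0 y).
move: (Num.sqrt x) (Num.sqrt y) => s u ex ey s0 u0 gap; subst x y.
have half : 0 <= (s ^+ 2 - u ^+ 2) / 2 <= t.
  by apply/andP; split; [lra | apply: le_trans gap; nra].
nra.
Qed.

Lemma greedy_decay_rate (rho S : nat -> R) (l E kappa : R) :
  0 <= l -> 0 <= E -> 0 < kappa ->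
  (forall k, 0 <= rho k) -> (forall k, 0 <= S k) ->
  (forall k, rho k.+1 <= rho k - kappa ^+ 2 * S k) ->
  (forall k, rho k - Num.sqrt (rho k) * Num.sqrt E <= l * Num.sqrt (S k)) ->
  forall m, rho m.+1 <= 4 / kappa ^+ 2 * (m.+2%:R)^-1 * (l * l) + E.
Proof.
move=> l0 E0 kappa0 rho0 S0 rho_dec gap.
pose a k := rho k - E.
have a_dec k : a k.+1 <= a k - kappa ^+ 2 * S k by rewrite /a; have := rho_dec k; lra.
have a_sqr k : 0 <= a k -> a k ^+ 2 <= 4 * l ^+ 2 * S k.
  move=> ak; rewrite -(sqr_sqrtr (S0 k)) -mulrA -exprMn.
  by apply: sqr_gap_le (rho0 k) E0 _ (gap k); rewrite -subr_ge0.
have [l_eq0 m|l_neq0] := eqVneq l 0.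
  rewrite l_eq0 !mulr0 add0r -subr_le0 leNgt; apply/negP => am.
  have := a_sqr m.+1 (ltW am).
  by rewrite l_eq0 (expr2 0) !(mulr0, mul0r) leNgt mulr_gt0.
have l_gt0 : 0 < l by rewrite lt_def l_neq0.
set B := 4 * l ^+ 2 / kappa ^+ 2.
have B_gt0 : 0 < B by rewrite divr_gt0 ?mulr_gt0 ?exprn_gt0.
have a_step k : 0 <= a k -> a k.+1 <= a k - a k ^+ 2 / B.
  move=> ak; apply: le_trans (a_dec k) _; rewrite lerD2l lerN2.
  have -> : a k ^+ 2 / B = kappa ^+ 2 * (a k ^+ 2 / (4 * l ^+ 2)).
    by rewrite /B; field; rewrite !gt_eqF.
  by rewrite ler_pM2l ?exprn_gt0 // ler_pdivrMr ?mulr_gt0 ?exprn_gt0 // mulrC a_sqr.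
have a_decr k : a k.+1 <= a k.
  by have := a_dec k; have := mulr_ge0 (sqr_ge0 kappa) (S0 k); lra.
move=> m; have := quadratic_recursion_le B_gt0 a_decr a_step m.
have -> : B / m.+2%:R = 4 / kappa ^+ 2 * (m.+2%:R)^-1 * (l * l) by rewrite /B; ring.
by rewrite /a lerBlDr.
Qed.

End GreedyRate.

Section CollectiveOMP.
Variables (R : realType) (V : completeNormedModType R) (inner : V -> V -> R).
Variables (D : set V) (n : nat) (phi : 'I_n -> V) (kappa : R) (omega : nat -> V).
Hypotheses (ip : is_inner_product inner) (D_normed : forall w, D w -> `|w| = 1).
Hypothesis omp : collective_omp inner D phi kappa omega.

Local Notation res k i := (phi i - proj inner (Wspan omega k) (phi i)).
Local Notation rho := (residual inner phi omega).

Definition omp_gain k w := \sum_i inner (res k i) w ^+ 2.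

Definition max_gain k := sup [set omp_gain k w | w in D].

Lemma residual_ge0 k : 0 <= rho k.
Proof. by apply: sumr_ge0 => i _; apply: sqr_ge0. Qed.

Lemma omp_gain_le_residual k w : D w -> omp_gain k w <= rho k.
Proof.
move=> Dw; apply: ler_sum => i _.
by have := sqr_inner_le ip (res k i) w; rewrite (D_normed Dw) expr1n mulr1.
Qed.

Lemma omp_gain_le_max k w : D w -> omp_gain k w <= max_gain k.
Proof.
move=> Dw; apply: ub_le_sup; last by exists w.
by exists (rho k) => _ [g Dg <-]; apply: omp_gain_le_residual.
Qed.

Lemma max_gain_ge0 k : 0 <= max_gain k.
Proof.
apply: le_trans _ (omp_gain_le_max k (omp k).1).
by apply: sumr_ge0 => i _; apply: sqr_ge0.
Qed.

(* Adding to [proj (phi i)] its component [t] along the new atom gives an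
   element of [W k.+1] at squared distance [|res k i|^2 - t^2] from [phi i]. *)
Lemma residualS_le k : rho k.+1 <= rho k - kappa ^+ 2 * max_gain k.
Proof.
have [D_new gain_new] := omp k.
apply: (@le_trans _ _ (rho k - omp_gain k (omega k.+1))); last by rewrite lerD2l lerN2.
rewrite /residual /omp_gain -sumrB; apply: ler_sum => i _.
set t := inner (res k i) (omega k.+1).
have W_new : Wspan omega k.+1 (proj inner (Wspan omega k) (phi i) + t *: omega k.+1).
  apply: WspanD; last exact/WspanZ/Wspan_last.
  exact/WspanS/(projP ip omega k (phi i)).1.
apply: le_trans (proj_min ip (phi i) W_new) _.
rewrite opprD addrA (sqr_normB ip) (innerZr ip) normrZ (D_normed D_new) mulr1 -/t.
by rewrite real_normK ?num_real // le_eqVlt; apply/orP; left; apply/eqP; ring.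
Qed.

Lemma residual_gap_le psi l : l1_norm D psi = l%:E -> forall k,
  rho k - Num.sqrt (rho k) * Num.sqrt (\sum_i `|phi i - psi i| ^+ 2) <=
  l * Num.sqrt (max_gain k).
Proof.
move=> psi_l k.
apply: le_trans (sum_inner_le_l1_norm ip (omp_gain_le_max k) (max_gain_ge0 k) psi_l).
have rho_split : rho k =
    \sum_i inner (res k i) (psi i) + \sum_i inner (res k i) (phi i - psi i).
  rewrite -big_split; apply: eq_bigr => i _.
  by rewrite /= (innerBr ip) addrCA subrr addr0 -(inner_proj_self ip).
by rewrite {1}rho_split -addrA gerDl subr_le0; apply: sum_inner_le.
Qed.

End CollectiveOMP.

Theorem theorem2 (R : realType) (V : completeNormedModType R)
    (inner : V -> V -> R) (D : set V) (n : nat) (phi : 'I_n -> V)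
    (kappa : R) (omega : nat -> V) :
  is_inner_product inner ->
  is_dictionary D ->
  is_orthonormal inner phi ->
  0 < kappa < 1 ->
  collective_omp inner D phi kappa omega ->
  forall (psi : 'I_n -> V) (m : nat), (1 <= m)%N ->
    ((residual inner phi omega m)%:E <=
     (4 / kappa ^+ 2 * (m.+1%:R)^-1)%:E * (l1_norm D psi * l1_norm D psi)
     + (\sum_(i < n) `|phi i - psi i| ^+ 2)%:E)%E.
Proof.
move=> ip [D_normed _] _ /andP[kappa_gt0 _] omp psi [//|m] _.
have E0 : 0 <= \sum_(i < n) `|phi i - psi i| ^+ 2.
  by apply: sumr_ge0 => i _; apply: sqr_ge0.
move: (l1_norm_ge0 D psi); case psi_l : (l1_norm D psi) => [l| |] // l_ge0.
  rewrite -!EFinM -EFinD lee_fin; rewrite lee_fin in l_ge0.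
  exact: (greedy_decay_rate l_ge0 E0 kappa_gt0 (residual_ge0 inner phi omega)
    (max_gain_ge0 ip D_normed omp) (residualS_le ip D_normed omp)
    (residual_gap_le ip D_normed omp psi_l)).
have c_gt0 : 0 < 4 / kappa ^+ 2 * (m.+2%:R)^-1.
  by rewrite mulr_gt0 ?divr_gt0 ?exprn_gt0 ?invr_gt0 ?ltr0n.
by rewrite mulyy muleC gt0_mulye // addye ?leey.
Qed.
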